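(* If $\mathcal{P}$ and $\mathcal{Q}$ are locally finite posets, then $J_\mathcal{P}\times J_\mathcal{Q}=J_{\mathcal{P}\times\mathcal{Q}}$, i.e. for all $(x_1,y_1,z_1)\in\mathcal{F}l^3(\mathcal{P})$ and $(x_2,y_2,z_2)\in\mathcal{F}l^3(\mathcal{Q})$, $$J_{\mathcal{P}\times\mathcal{Q}}\big((x_1,x_2),(y_1,y_2),(z_1,z_2)\big)=J_\mathcal{P}(x_1,y_1,z_1)\,J_\mathcal{Q}(x_2,y_2,z_2).$$
   Context: $\mathcal{P}\times\mathcal{Q}$ has the product order. For a locally finite poset $\mathcal{R}$, $\mathcal{F}l^3(\mathcal{R})=\{(x,y,z)\in\mathcal{R}^3:x\le y\le z\}$, $\delta_3(x,y,z)=1$ if $x=y=z$ and $0$ otherwise, and $J_\mathcal{R}:\mathcal{F}l^3(\mathcal{R})\to\mathbb{Z}$ is the unique function with $\sum_{x\le a\le y\le b\le z}J_\mathcal{R}(a,y,b)=\delta_3(x,y,z)$ for all $(x,y,z)\in\mathcal{F}l^3(\mathcal{R})$ (sum over $a,b\in\mathcal{R}$). *)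

From HB Require Import structures.
From mathcomp Require Import all_boot all_order all_algebra.
Set Implicit Arguments. Unset Strict Implicit. Unset Printing Implicit Defensive.
Import Order.TTheory GRing.Theory Num.Theory.

Local Open Scope order_scope.

Definition enum_itv (d : Order.disp_t) (T : porderType d) (s : seq T) (x z : T) : Prop :=
  uniq s /\ forall a : T, (a \in s) = (x <= a <= z).

Definition locally_finite (d : Order.disp_t) (T : porderType d) : Prop :=
  forall x z : T, exists s : seq T, enum_itv s x z.

Definition delta3 (d : Order.disp_t) (T : porderType d) (x y z : T) : int :=
  if (x == y) && (y == z) then 1%R else 0%R.

(* [is_J f]: f satisfies the defining identity of J_T on Fl^3(T):
   for all x <= y <= z,
     sum_{x <= a <= y <= b <= z} f(a, y, b) = delta_3(x, y, z). Only the values of f on Fl^3(T) matter. *)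
Definition is_J (d : Order.disp_t) (T : porderType d) (f : T -> T -> T -> int) : Prop :=
  forall (x y z : T) (sxy syz : seq T),
    x <= y -> y <= z -> enum_itv sxy x y -> enum_itv syz y z ->
    (\sum_(a <- sxy) \sum_(b <- syz) f a y b)%R = delta3 x y z.

(* J_R is characterised by a triangular system: in the defining identity for
   (x, y, z), the term J(x, y, z) appears next to values J(a, y, b) on strictly
   smaller intervals [a, y] x [y, b].  So any two solutions agree, by induction
   on the sizes of the intervals.  The function (a, y, b) |-> J_P(a1, y1, b1)
   J_Q(a2, y2, b2) on P x Q is a solution, because intervals of the product
   order are products of intervals, the double sum factors, and delta_3 is
   multiplicative. *)

From mathcomp Require Import all_boot all_order all_algebra.
Import Order.TTheory GRing.Theory.

Set Implicit Arguments.
Unset Strict Implicit.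
Unset Printing Implicit Defensive.

Local Open Scope order_scope.

Lemma size_filter_lt (T : eqType) (p : pred T) (s : seq T) (x : T) :
  x \in s -> ~~ p x -> (size (filter p s) < size s)%N.
Proof.
move=> xs npx; rewrite size_filter -(count_predC p s) -addn1 leq_add2l.
by rewrite -has_count; apply/hasP; exists x.
Qed.

Section Uniqueness.
Variables (d : Order.disp_t) (T : porderType d).
Implicit Types (x y z a b : T) (s sxy syz : seq T).

Lemma enum_itv_filter_lb s x y a :
  enum_itv s x y -> x <= a -> enum_itv [seq c <- s | a <= c] a y.
Proof.
move=> [us ms] xa; split=> [|c]; first exact: filter_uniq.
rewrite mem_filter ms; apply/idP/idP => [/and3P[-> _ ->] //|/andP[ac ->]].
by rewrite ac (le_trans xa ac).
Qed.

Lemma enum_itv_filter_ub s y z b :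
  enum_itv s y z -> b <= z -> enum_itv [seq c <- s | c <= b] y b.
Proof.
move=> [us ms] bz; split=> [|c]; first exact: filter_uniq.
rewrite mem_filter ms; apply/idP/idP => [/and3P[-> -> _] //|/andP[yc cb]].
by rewrite cb yc (le_trans cb bz).
Qed.

Lemma J_homogeneous_eq0 (h : T -> T -> T -> int) :
  (forall x y z sxy syz, x <= y -> y <= z ->
     enum_itv sxy x y -> enum_itv syz y z ->
     (\sum_(a <- sxy) \sum_(b <- syz) h a y b)%R = 0%R) ->
  forall x y z sxy syz, x <= y -> y <= z ->
    enum_itv sxy x y -> enum_itv syz y z -> h x y z = 0%R.
Proof.
move=> hsum x y z sxy syz.
have [n] := ubnP (size sxy + size syz).
elim: n => // n IH in x z sxy syz * => ltn xy yz exy eyz.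
have [[uxy mxy] [uyz myz]] := (exy, eyz).
have xin : x \in sxy by rewrite mxy lexx xy.
have zin : z \in syz by rewrite myz lexx yz.
have h_other a b : a \in sxy -> b \in syz -> (a != x) || (b != z) ->
    h a y b = 0%R.
  rewrite mxy myz => /andP[xa ay] /andP[yb bz] ab_ne.
  set sa := [seq c <- sxy | a <= c]; set sb := [seq c <- syz | c <= b].
  apply: (IH a b sa sb _ ay yb (enum_itv_filter_lb exy xa)
                               (enum_itv_filter_ub eyz bz)).
  have le_sa : (size sa <= size sxy)%N by rewrite size_filter count_size.
  have le_sb : (size sb <= size syz)%N by rewrite size_filter count_size.
  rewrite ltnS in ltn; apply: leq_trans _ ltn.
  have [lt_sa | lt_sb] : (size sa < size sxy)%N \/ (size sb < size syz)%N.
  - case/orP: ab_ne => [ax | bz']; [left | right]; apply: size_filter_lt.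
    + exact: xin.
    + by apply: contra ax => ax'; rewrite eq_le xa ax'.
    + exact: zin.
    + by apply: contra bz' => zb; rewrite eq_le bz zb.
  - by rewrite -addSn leq_add.
  - by rewrite -addnS leq_add.
have := hsum x y z sxy syz xy yz exy eyz.
rewrite (bigD1_seq x) //= (bigD1_seq z) //= big1_seq ?addr0; last first.
  by move=> b /andP[bz bin]; rewrite h_other // bz orbT.
rewrite big1_seq ?addr0 // => a /andP[ax ain].
by rewrite big1_seq // => b /andP[_ bin]; rewrite h_other // ax.
Qed.

Lemma is_J_unique (f g : T -> T -> T -> int) x y z :
  locally_finite T -> is_J f -> is_J g -> x <= y -> y <= z -> f x y z = g x y z.
Proof.
move=> lfT hf hg xy yz; apply/eqP; rewrite -subr_eq0; apply/eqP.
have [sxy exy] := lfT x y; have [syz eyz] := lfT y z.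
apply: (J_homogeneous_eq0 (h := fun a y b => (f a y b - g a y b)%R) _ xy yz exy eyz).
move=> u v w su sw uv vw eu ew /=.
under eq_bigr do rewrite sumrB.
by rewrite sumrB (hf u v w) // (hg u v w) // subrr.
Qed.

End Uniqueness.

Section Product.
Variables (d1 d2 : Order.disp_t) (P : porderType d1) (Q : porderType d2).
Local Notation PQ := (P *p Q)%type.

Lemma enum_itv_pairs (s1 : seq P) (s2 : seq Q) (x z : PQ) :
  enum_itv s1 x.1 z.1 -> enum_itv s2 x.2 z.2 ->
  enum_itv [seq (a, b) : PQ | a <- s1, b <- s2] x z.
Proof.
move=> [u1 m1] [u2 m2]; split.
  by apply: allpairs_uniq => // [[a b]] [a' b'] _ _ /= [-> ->].
case=> a b; rewrite !leEprod /= andbACA -m1 -m2.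
by apply/allpairsP/andP => [[[a' b'] /= [? ? [-> ->]]] | []]; last exists (a, b).
Qed.

Lemma locally_finite_pair :
  locally_finite P -> locally_finite Q -> locally_finite PQ.
Proof.
move=> lfP lfQ x z; have [s1 e1] := lfP x.1 z.1; have [s2 e2] := lfQ x.2 z.2.
by eexists; exact: enum_itv_pairs e1 e2.
Qed.

Lemma big_itv_pairs (s : seq PQ) (s1 : seq P) (s2 : seq Q) (x z : PQ)
    (F : PQ -> int) :
  enum_itv s x z -> enum_itv s1 x.1 z.1 -> enum_itv s2 x.2 z.2 ->
  (\sum_(a <- s) F a = \sum_(a1 <- s1) \sum_(a2 <- s2) F (a1, a2))%R.
Proof.
move=> [u m] e1 e2; have [u' m'] := enum_itv_pairs e1 e2.
rewrite (perm_big [seq (a, b) : PQ | a <- s1, b <- s2]) ?big_allpairs //.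
by apply: uniq_perm => // c; rewrite m m'.
Qed.

Lemma delta3_pair (x y z : PQ) :
  delta3 x y z = (delta3 x.1 y.1 z.1 * delta3 x.2 y.2 z.2)%R.
Proof.
case: x y z => [x1 x2] [y1 y2] [z1 z2]; rewrite /delta3 -!pair_eqE /=.
by case: (x1 == y1); case: (y1 == z1); case: (x2 == y2); case: (y2 == z2).
Qed.

Lemma is_J_pair (JP : P -> P -> P -> int) (JQ : Q -> Q -> Q -> int) :
  locally_finite P -> locally_finite Q -> is_J JP -> is_J JQ ->
  is_J (fun a y b : PQ => JP a.1 y.1 b.1 * JQ a.2 y.2 b.2)%R.
Proof.
move=> lfP lfQ hJP hJQ x y z sxy syz.
rewrite !leEprod => /andP[xy1 xy2] /andP[yz1 yz2] exy eyz.
have [s1 e1] := lfP x.1 y.1; have [s2 e2] := lfQ x.2 y.2.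
have [t1 f1] := lfP y.1 z.1; have [t2 f2] := lfQ y.2 z.2.
rewrite delta3_pair -(hJP _ _ _ _ _ xy1 yz1 e1 f1) -(hJQ _ _ _ _ _ xy2 yz2 e2 f2).
rewrite (big_itv_pairs _ exy e1 e2) big_distrlr /=.
apply: eq_bigr => a1 _; apply: eq_bigr => a2 _.
by rewrite (big_itv_pairs _ eyz f1 f2) big_distrlr.
Qed.

End Product.

Theorem proposition5p5
  (d1 d2 : Order.disp_t) (P : porderType d1) (Q : porderType d2)
  (lfP : locally_finite P) (lfQ : locally_finite Q)
  (JP : P -> P -> P -> int) (JQ : Q -> Q -> Q -> int)
  (JPQ : (P *p Q)%type -> (P *p Q)%type -> (P *p Q)%type -> int)
  (hJP : is_J JP) (hJQ : is_J JQ) (hJPQ : is_J JPQ)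
  (x1 y1 z1 : P) (x2 y2 z2 : Q) :
  (x1 <= y1)%O -> (y1 <= z1)%O -> (x2 <= y2)%O -> (y2 <= z2)%O ->
  JPQ (x1, x2) (y1, y2) (z1, z2) = (JP x1 y1 z1 * JQ x2 y2 z2)%R.
Proof.
move=> xy1 yz1 xy2 yz2.
have lfPQ := locally_finite_pair lfP lfQ.
apply: (is_J_unique lfPQ hJPQ (is_J_pair lfP lfQ hJP hJQ)).
  by rewrite leEprod /= xy1 xy2.
by rewrite leEprod /= yz1 yz2.
Qed.
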